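(* Let $a,b,c,d,t,u,v$ be non-negative integers such that $2\le v\le u-1$ and $0\le t\le u-1$. Suppose there exists a $(v+1)$-RGDD of type $u^{v+1}$. Suppose also that there exist 4-GDDs of types $a^u d^1$ and $b^u d^1$, as well as a 4-GDD of type $a^v b^1 c^1$ if $tc>0$, and a 4-GDD of type $a^v b^1$ if $c=0$ or $t<u-1$. Then there exists a 4-GDD of type $(va+b)^u(ct+d)^1$.
   Context: For a positive integer $k$, a $k$-GDD of type $g_1^{u_1}\cdots g_r^{u_r}$ is a triple $(V,\mathcal G,\mathcal B)$ where $V$ is a set of $u_1g_1+\cdots+u_rg_r$ points, $\mathcal G$ is a partition of $V$ into $u_i$ groups of size $g_i$ for each $i$, and $\mathcal B$ is a non-empty collection of $k$-element subsets of $V$ (blocks) such that every pair of points from distinct groups lies in exactly one block and no pair of points from the same group lies in any block. A group size $0$ in a type contributes no group (e.g. type $a^u0^1$ means type $a^u$). A parallel class is a set of blocks partitioning $V$; a $k$-RGDD is a $k$-GDD whose blocks can be partitioned into parallel classes. *)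

From mathcomp Require Import all_boot.
Set Implicit Arguments. Unset Strict Implicit. Unset Printing Implicit Defensive.

(* A group type  g_1^{u_1} ... g_r^{u_r}  is encoded as the list
   [:: (g_1, u_1); ...; (g_r, u_r)].  Its multiset of (nonzero) group sizes: *)
Definition type_sizes (ty : seq (nat * nat)) : seq nat :=
  [seq g <- flatten [seq nseq p.2 p.1 | p <- ty] | 0 < g].

Definition type_points (ty : seq (nat * nat)) : nat :=
  \sum_(p <- ty) p.1 * p.2.

Definition is_GDD (k : nat) (ty : seq (nat * nat)) (T : finType)
    (G : {set {set T}}) (B : {set {set T}}) : Prop :=
  [/\ partition G [set: T],
      perm_eq [seq #|X : {set T}| | X <- enum G] (type_sizes ty),
      B != set0 /\
      (forall b, b \in B -> #|b| = k),
      (forall x y, x != y -> pblock G x != pblock G y ->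
          #|[set b in B | (x \in b) && (y \in b)]| = 1)
    & (forall x y, x != y -> pblock G x = pblock G y ->
          forall b, b \in B -> ~~ ((x \in b) && (y \in b)))].

Definition resolvable (T : finType) (B : {set {set T}}) : Prop :=
  exists P : {set {set {set T}}},
    partition P B /\ (forall C, C \in P -> partition C [set: T]).

Definition GDD_exists (k : nat) (ty : seq (nat * nat)) : Prop :=
  exists (G B : {set {set 'I_(type_points ty)}}), is_GDD k ty G B.

Definition RGDD_exists (k : nat) (ty : seq (nat * nat)) : Prop :=
  exists (G B : {set {set 'I_(type_points ty)}}),
    is_GDD k ty G B /\ resolvable B.

(* Wilson's fundamental construction with extra points.  In the resolvable
   master design fix a group gs and a parallel class P0; inflate the points of
   gs by b and all other points by a, and add d points attached to every group
   and c points attached to each of t parallel classes other than P0.  On every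
   inflated group together with the d points place a 4-GDD of type a^u d^1
   (b^u d^1 for gs), on every inflated block outside P0 together with the
   points of its class a 4-GDD of type a^v b^1 c^1 or a^v b^1.  Since groups
   and blocks cover each pair of master points exactly once, two inflated
   points lie in a common new block exactly when their master points lie in
   different blocks of P0; hence the inflated blocks of P0 and the ct + d extra
   points are the groups of the resulting 4-GDD.

   Ingredients are placed through labellings whose fibres are the groups; a
   labelled design can be moved to any labelling with the same multiset of
   group sizes. *)

From mathcomp Require Import all_boot zify.
Set Implicit Arguments. Unset Strict Implicit. Unset Printing Implicit Defensive.

Lemma enum_setE (U : finType) (S : {set U}) : enum S = [seq x <- enum U | x \in S].
Proof. by rewrite enumT /enum_mem; apply: eq_filter. Qed.

Lemma enum_option (T : finType) : enum {: option T} = None :: [seq Some x | x <- enum T].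
Proof. by rewrite !enumT [in LHS]unlock. Qed.

Lemma perm_enum_imset (T U : finType) (f : T -> U) (A : {set T}) :
  {in A &, injective f} -> perm_eq (enum (f @: A)) [seq f x | x <- enum A].
Proof.
move=> f_inj; apply: uniq_perm; rewrite ?enum_uniq ?map_inj_in_uniq ?enum_uniq //.
  by move=> x y; rewrite !mem_enum; apply: f_inj.
move=> y; rewrite mem_enum; apply/imsetP/mapP => [[x xA ->]|[x]]; exists x => //.
  by rewrite mem_enum.
by rewrite -mem_enum.
Qed.

Lemma filter_pos_map_enum (U : finType) (S : {set U}) (f : U -> nat) :
  {in ~: S, forall x, f x = 0} ->
  [seq n <- [seq f x | x <- enum U] | 0 < n] = [seq n <- [seq f x | x <- enum S] | 0 < n].
Proof.
move=> f0; rewrite (enum_setE S); elim: (enum U) => //= x s ->.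
by case: (boolP (x \in S)) => //= xS; rewrite f0 ?inE.
Qed.

Lemma perm_pos_cons x s s' : perm_eq s s' ->
  perm_eq [seq n <- x :: s | 0 < n] [seq n <- s' ++ [:: x] | 0 < n].
Proof. by move=> ss'; apply: perm_filter; rewrite cats1 perm_sym perm_rcons perm_cons perm_sym. Qed.

Lemma card_sum_set (A B : finType) (P : pred (A + B)) :
  #|[set x | P x]| = #|[set a | P (inl a)]| + #|[set b | P (inr b)]|.
Proof.
rewrite -!sum1_card (big_sumType _ [pred x | x \in [set x | P x]]).
by congr (_ + _); apply: eq_bigl => x; rewrite !inE.
Qed.

Lemma card_tag_set (T : finType) (w : T -> nat) (Q : pred T) :
  #|[set s : {p : T & 'I_(w p)} | Q (tag s)]| = \sum_(p | Q p) w p.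
Proof.
transitivity (\sum_(p | Q p) \sum_(j : 'I_(w p)) 1).
  by rewrite sig_big_dep -sum1_card; apply: eq_bigl => s; rewrite inE andbT.
by apply: eq_bigr => p _; rewrite sum1_card card_ord.
Qed.

Lemma card_ord_eq t n : #|[set i : 'I_t | val i == n]| = (n < t).
Proof.
case: ltnP => [lt|ge] /=.
  transitivity #|[set Ordinal lt]|; last by rewrite cards1.
  apply: eq_card => i; rewrite !inE.
  by apply/eqP/eqP => [e|->]; first apply: val_inj.
by apply: eq_card0 => i; rewrite inE; apply: contraTF ge => /eqP <-; rewrite -ltnNge.
Qed.

Lemma sets_through_pblock (T : finType) (C : {set {set T}}) p :
  partition C [set: T] -> [set L in C | p \in L] = [set pblock C p].
Proof.
case/and3P => /eqP coverC trivC _; apply/setP => L; rewrite !inE.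
apply/andP/eqP => [[LC pL]|->]; first by rewrite (def_pblock trivC LC pL).
by rewrite pblock_mem ?mem_pblock ?coverC.
Qed.

Section MatchSets.
Variables (T U : finType) (A : {set T}) (B : {set U}) (u0 : U).

Definition match_sets (x : T) : U := nth u0 (enum B) (index x (enum A)).

Hypothesis cardAB : #|A| = #|B|.

Lemma match_sets_inj : {in A &, injective match_sets}.
Proof.
have lt x : x \in A -> index x (enum A) < size (enum B).
  by rewrite -cardE -cardAB cardE index_mem mem_enum.
move=> x y xA yA /eqP; rewrite /match_sets nth_uniq ?enum_uniq ?lt // => /eqP.
by move=> e; apply: (index_inj x) e; rewrite mem_enum.
Qed.

Lemma match_setsE : match_sets @: A = B.
Proof.
apply/eqP; rewrite eqEcard card_in_imset ?cardAB ?leqnn ?andbT; last exact: match_sets_inj.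
apply/subsetP => _ /imsetP[x xA ->]; rewrite -mem_enum mem_nth //.
by rewrite -cardE -cardAB cardE index_mem mem_enum.
Qed.

End MatchSets.

(** * Labelled group divisible designs *)

Section LabelledDesigns.
Variables (X : finType) (K : eqType).
Implicit Types (lab : X -> option K) (B : {set {set X}}).

Definition labelled lab : {set X} := [set x | lab x != None].

Definition separated lab x y := [&& lab x != None, lab y != None & lab x != lab y].

(* Points labelled [None] lie outside the design; the groups are the fibres of [lab]. *)
Definition is_labelled_GDD lab k B : Prop :=
  [/\ {in B, forall b : {set X}, #|b| = k},
      {in B, forall b : {set X}, b \subset labelled lab},
      forall x y, separated lab x y -> #|[set b in B | (x \in b) && (y \in b)]| = 1
    & forall x y, x != y -> lab x = lab y ->
        {in B, forall b : {set X}, ~~ ((x \in b) && (y \in b))}].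

Definition label_classes lab : {set {set X}} := preim_partition lab (labelled lab).

Definition label_sizes lab : seq nat := [seq #|A : {set X}| | A <- enum (label_classes lab)].

Lemma separated_sym lab x y : separated lab x y = separated lab y x.
Proof. by rewrite /separated; case: (lab x) => [?|]; case: (lab y) => [?|] //=; rewrite eq_sym. Qed.

Lemma labelled_GDD_separated lab k B b x y :
  is_labelled_GDD lab k B -> b \in B -> x \in b -> y \in b -> x != y -> separated lab x y.
Proof.
case=> _ inB _ sameB bB xb yb xy; have /subsetP sb := inB b bB.
have := sb x xb; have := sb y yb; rewrite !inE /separated => -> ->.
by apply/eqP => exy; move: (sameB x y xy exy b bB); rewrite xb yb.
Qed.

Lemma label_classes_partition lab : partition (label_classes lab) (labelled lab).
Proof. exact: preim_partitionP. Qed.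

Lemma mem_pblock_label_classes lab x y : x \in labelled lab -> y \in labelled lab ->
  (y \in pblock (label_classes lab) x) = (lab x == lab y).
Proof. by apply: pblock_equivalence_partition; split=> // /eqP ->. Qed.

Lemma eq_pblock_label_classes lab x y : x \in labelled lab -> y \in labelled lab ->
  (pblock (label_classes lab) x == pblock (label_classes lab) y) = (lab x == lab y).
Proof.
move=> xl yl; have [/eqP cover_lab triv _] := and3P (label_classes_partition lab).
by rewrite eq_pblock // ?cover_lab // mem_pblock_label_classes.
Qed.

End LabelledDesigns.

Lemma card_labelled (X : finType) (K : eqType) (lab : X -> option K) :
  #|labelled lab| = sumn (label_sizes lab).
Proof.
by rewrite (card_partition (label_classes_partition lab)) /label_sizes sumnE big_map big_enum.
Qed.

Lemma card_classes_of_size (X : finType) (K : eqType) (lab : X -> option K) n :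
  #|[set A in label_classes lab | #|A| == n]| = count_mem n (label_sizes lab).
Proof.
rewrite count_map -sum1_count big_enum_cond -sum1_card.
by apply: eq_bigl => A; rewrite inE.
Qed.

Lemma label_sizesE (X K : finType) (lab : X -> option K) :
  perm_eq (label_sizes lab) [seq n <- [seq #|[set x | lab x == Some o]| | o <- enum K] | 0 < n].
Proof.
pose fib o := [set x | lab x == Some o].
have fib_inj : {in [set o | 0 < #|fib o|] &, injective fib}.
  move=> o1 o2 /[!inE] /card_gt0P[x xo1] _ e.
  by move: (xo1); rewrite e !inE => /eqP; move: xo1; rewrite inE => /eqP -> [].
have classesE : label_classes lab = fib @: [set o | 0 < #|fib o|].
  apply/setP => A; apply/imsetP/imsetP => [[x /[!inE] xl ->]|[o /[!inE] /card_gt0P[x xo] ->]].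
    case E : (lab x) xl => [o|//] _; exists o.
      by rewrite inE; apply/card_gt0P; exists x; rewrite inE E.
    by apply/setP => y; rewrite !inE eq_sym; case: (lab y).
  move: xo; rewrite inE => /eqP E; exists x; first by rewrite inE E.
  by apply/setP => y; rewrite !inE E eq_sym; case: (lab y).
rewrite /label_sizes classesE filter_map.
apply: (perm_trans (perm_map _ (perm_enum_imset fib_inj))); rewrite -map_comp.
suff -> : enum [set o | 0 < #|fib o|] = [seq o <- enum K | 0 < #|fib o|] by [].
by rewrite enum_setE; apply: eq_filter => o; rewrite inE.
Qed.

Lemma label_sizes_comp (X Y K : finType) (lab : X -> option K) (h : Y -> X) :
  bijective h -> perm_eq (label_sizes (lab \o h)) (label_sizes lab).
Proof.
move=> h_bij; apply: (perm_trans (label_sizesE _)); rewrite perm_sym.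
apply: (perm_trans (label_sizesE _)); rewrite perm_sym.
suff -> : [seq #|[set y | (lab \o h) y == Some o]| | o <- enum K] =
          [seq #|[set x | lab x == Some o]| | o <- enum K] by [].
apply: eq_map => o; rewrite -(on_card_preimset (onW_bij _ h_bij)).
by apply: eq_card => y; rewrite !inE.
Qed.

Section Transport.
Variables (X Y : finType) (K L : eqType) (lx : X -> option K) (ly : Y -> option L).
Variables (f : X -> Y) (k : nat) (B : {set {set X}}).
Hypotheses (f_inj : {in labelled lx &, injective f})
  (f_label : {in labelled lx &, forall x x', (ly (f x) == ly (f x')) = (lx x == lx x')})
  (f_labelled : {in labelled lx, forall x, f x \in labelled ly})
  (f_onto : {subset labelled ly <= f @: labelled lx}).

Lemma labelled_GDD_imset :
  is_labelled_GDD lx k B -> is_labelled_GDD ly k [set f @: (b : {set X}) | b in B].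
Proof.
case=> sizeB inB pairB sameB.
have bl b x : b \in B -> x \in b -> x \in labelled lx by move=> bB; apply/subsetP/inB.
have memf b x : b \in B -> x \in labelled lx -> (f x \in f @: b) = (x \in b).
  move=> bB xl; apply/imsetP/idP => [[z zb /f_inj ->] //|xb]; last by exists x.
  exact: bl zb.
have imsetf_inj : {in B &, injective (fun b : {set X} => f @: b)}.
  move=> b1 b2 b1B b2B e; apply/setP => z; apply/idP/idP => zb.
  - by rewrite -(memf b2 z b2B (bl b1 z b1B zb)) -e imset_f.
  - by rewrite -(memf b1 z b1B (bl b2 z b2B zb)) e imset_f.
split.
- move=> _ /imsetP[b bB ->]; rewrite card_in_imset ?sizeB //.
  by move=> x y xb yb; apply: f_inj; apply: bl xb + apply: bl yb.
- move=> _ /imsetP[b bB ->]; apply/subsetP => _ /imsetP[x xb ->].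
  exact/f_labelled/bl/xb.
- move=> x' y' /and3P[xl' yl' lxy].
  have /imsetP[x xl ex] : x' \in f @: labelled lx by apply/f_onto; rewrite inE.
  have /imsetP[y yl ey] : y' \in f @: labelled lx by apply/f_onto; rewrite inE.
  subst x' y'; have sep : separated lx x y.
    by move: (xl) (yl); rewrite /separated !inE -f_label // => -> ->.
  have sub : {subset [set b in B | (x \in b) && (y \in b)] <= B}.
    by move=> b; rewrite inE => /andP[].
  rewrite -(pairB x y sep) -(card_in_imset (sub_in2 sub imsetf_inj)); apply: eq_card => b'.
  apply/idP/imsetP => [|[b /[!inE] /andP[bB xyb] ->]].
    by rewrite inE => /andP[/imsetP[b bB ->]]; rewrite !memf // => xyb; exists b; rewrite // inE bB.
  by rewrite (imset_f _ bB) !memf.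
- move=> x' y' xy' lxy' _ /imsetP[b bB ->]; apply/negP => /andP[].
  move=> /imsetP[x xb ex] /imsetP[y yb ey]; subst x' y'.
  have xy : x != y by apply: contraNneq xy' => ->.
  have /eqP lxy : lx x == lx y by rewrite -f_label ?lxy' // (bl b).
  by move: (sameB x y xy lxy b bB); rewrite xb yb.
Qed.
End Transport.

Section Relabel.
Variables (X Y : finType) (K L : eqType) (lx : X -> option K) (ly : Y -> option L) (y0 : Y).
Hypothesis sizes : perm_eq (label_sizes lx) (label_sizes ly).

Local Notation CX := (label_classes lx).
Local Notation CY := (label_classes ly).

(* Classes of equal size are matched first, then the points of matched classes. *)
Definition relabel_class (A : {set X}) : {set Y} :=
  match_sets [set A' in CX | #|A'| == #|A|] [set A' in CY | #|A'| == #|A|] set0 A.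

Definition relabel (x : X) : Y := match_sets (pblock CX x) (relabel_class (pblock CX x)) y0 x.

Let cardCXY n : #|[set A in CX | #|A| == n]| = #|[set A in CY | #|A| == n]|.
Proof. by rewrite !card_classes_of_size; apply/permP. Qed.

Lemma relabel_class_mem A : A \in CX -> relabel_class A \in [set A' in CY | #|A'| == #|A|].
Proof.
by move=> AX; rewrite -(match_setsE set0 (cardCXY #|A|)); apply: imset_f; rewrite inE AX /=.
Qed.

Lemma relabel_class_inj : {in CX &, injective relabel_class}.
Proof.
move=> A1 A2 A1X A2X e.
have /setIdP[_ /eqP c1] := relabel_class_mem A1X.
have /setIdP[_ /eqP c2] := relabel_class_mem A2X.
have eA : #|A1| = #|A2| by rewrite -c1 -c2 e.
move: e; rewrite /relabel_class eA; apply: (match_sets_inj (cardCXY _)).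
  by apply/setIdP; rewrite eA.
by apply/setIdP.
Qed.

Let coverCX : cover CX = labelled lx.
Proof. by have /and3P[/eqP] := label_classes_partition lx. Qed.
Let coverCY : cover CY = labelled ly.
Proof. by have /and3P[/eqP] := label_classes_partition ly. Qed.
Let trivCX : trivIset CX.
Proof. by have /and3P[] := label_classes_partition lx. Qed.
Let trivCY : trivIset CY.
Proof. by have /and3P[] := label_classes_partition ly. Qed.

Let pblockX x : x \in labelled lx -> pblock CX x \in CX.
Proof. by move=> xl; rewrite pblock_mem ?coverCX. Qed.

Lemma relabel_in x : x \in labelled lx -> relabel x \in relabel_class (pblock CX x).
Proof.
move=> xl; have /setIdP[_ /eqP c] := relabel_class_mem (pblockX xl).
have xP : x \in pblock CX x by rewrite mem_pblock coverCX.
have := imset_f (match_sets (pblock CX x) (relabel_class (pblock CX x)) y0) xP.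
by rewrite (match_setsE _ (esym c)).
Qed.

Lemma pblock_relabel x :
  x \in labelled lx -> pblock CY (relabel x) = relabel_class (pblock CX x).
Proof.
move=> xl; have /setIdP[PY _] := relabel_class_mem (pblockX xl).
exact: def_pblock trivCY PY (relabel_in xl).
Qed.

Lemma relabel_labelled x : x \in labelled lx -> relabel x \in labelled ly.
Proof.
move=> xl; have /setIdP[PY _] := relabel_class_mem (pblockX xl).
by rewrite -coverCY; apply/bigcupP; exists (relabel_class (pblock CX x)); rewrite ?relabel_in.
Qed.

Lemma relabel_label :
  {in labelled lx &, forall x x', (ly (relabel x) == ly (relabel x')) = (lx x == lx x')}.
Proof.
move=> x x' xl xl'.
rewrite -eq_pblock_label_classes ?relabel_labelled // !pblock_relabel //.
by rewrite (inj_in_eq relabel_class_inj) ?pblockX // eq_pblock_label_classes.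
Qed.

Lemma relabel_inj : {in labelled lx &, injective relabel}.
Proof.
move=> x x' xl xl' e.
have /eqP lxx : lx x == lx x' by rewrite -relabel_label // e.
have ePx : pblock CX x = pblock CX x'.
  by apply/eqP; rewrite eq_pblock_label_classes // lxx.
have /setIdP[_ /eqP c] := relabel_class_mem (pblockX xl').
move: e; rewrite /relabel ePx; apply: (match_sets_inj (esym c)).
  by rewrite -ePx mem_pblock coverCX.
by rewrite mem_pblock coverCX.
Qed.

Lemma relabel_onto : {subset labelled ly <= relabel @: labelled lx}.
Proof.
move=> y yl; have PY : pblock CY y \in CY by rewrite pblock_mem ?coverCY.
have : pblock CY y \in [set A' in CY | #|A'| == #|pblock CY y|] by apply/setIdP.
rewrite -(match_setsE set0 (cardCXY _)) => /imsetP[A /setIdP[AX /eqP cA] eA].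
have {}eA : relabel_class A = pblock CY y by rewrite /relabel_class cA.
have /setIdP[_ /eqP c] := relabel_class_mem AX.
have : y \in relabel_class A by rewrite eA mem_pblock coverCY.
rewrite -(match_setsE y0 (esym c)) => /imsetP[x xA ->].
have xl : x \in labelled lx by rewrite -coverCX; apply/bigcupP; exists A.
have <- : relabel x = match_sets A (relabel_class A) y0 x.
  by rewrite /relabel (def_pblock trivCX AX xA).
exact: imset_f.
Qed.

End Relabel.

Lemma labelled_GDD_transfer (X Y : finType) (K L : eqType)
    (lx : X -> option K) (ly : Y -> option L) k (B : {set {set X}}) :
  0 < k -> is_labelled_GDD lx k B -> B != set0 ->
  perm_eq (label_sizes lx) (label_sizes ly) ->
  exists2 B' : {set {set Y}}, is_labelled_GDD ly k B' & B' != set0.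
Proof.
move=> k_gt0 gddB /set0Pn[b bB] sizes; have [sizeB inB _ _] := gddB.
have [x xb] : exists x, x \in b by apply/card_gt0P; rewrite sizeB.
have [y0 _] : exists y0, y0 \in labelled ly.
  apply/card_gt0P; rewrite card_labelled -(perm_sumn sizes) -card_labelled.
  by apply/card_gt0P; exists x; apply: subsetP (inB b bB) x xb.
exists [set relabel lx ly y0 @: (b : {set X}) | b in B].
  apply: labelled_GDD_imset gddB.
  - exact: relabel_inj.
  - exact: relabel_label.
  - exact: relabel_labelled.
  - exact: relabel_onto.
by apply/set0Pn; exists (relabel lx ly y0 @: b); apply: imset_f.
Qed.

Lemma type_pointsE ty : type_points ty = sumn (type_sizes ty).
Proof.
rewrite /type_points /type_sizes; elim: ty => [|[g n] ty IH]; first by rewrite big_nil.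
rewrite big_cons /= filter_cat sumn_cat IH filter_nseq sumn_nseq.
by case: g => [|g] //=; rewrite mul1n.
Qed.

Lemma label_classes_pblock (T : finType) (G : {set {set T}}) :
  partition G [set: T] -> label_classes (fun x => Some (pblock G x)) = G.
Proof.
rewrite /label_classes.
have -> : labelled (fun x => Some (pblock G x)) = [set: T] by apply/setP => x; rewrite !inE.
exact: preim_partition_pblock.
Qed.

Lemma labelled_GDD_pblock (T : finType) k ty (G B : {set {set T}}) :
  is_GDD k ty G B -> is_labelled_GDD (fun x => Some (pblock G x)) k B.
Proof.
case=> _ _ [_ sizeB] pairB sameB; split => //.
- by move=> b _; apply/subsetP => x; rewrite inE.
- move=> x y /and3P[_ _ /= ne]; apply: pairB => //.
  by apply: contraNneq ne => ->.
- by move=> x y xy [e]; apply: sameB.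
Qed.

Lemma labelled_GDD_of_GDD_exists k ty (Y : finType) (L : eqType) (lab : Y -> option L) :
  0 < k -> GDD_exists k ty -> perm_eq (label_sizes lab) (type_sizes ty) ->
  exists2 B, is_labelled_GDD lab k B & B != set0.
Proof.
move=> k_gt0 [G [B gdd]] sizes; have [partG sizesG [Bn _] _ _] := gdd.
apply: labelled_GDD_transfer k_gt0 (labelled_GDD_pblock gdd) Bn _.
by rewrite /label_sizes label_classes_pblock // (perm_trans sizesG) // perm_sym.
Qed.

Lemma is_GDD_label_classes (T : finType) (K : eqType) (lab : T -> K) k ty B :
  is_labelled_GDD (fun x => Some (lab x)) k B -> B != set0 ->
  perm_eq (label_sizes (fun x => Some (lab x))) (type_sizes ty) ->
  is_GDD k ty (label_classes (fun x => Some (lab x))) B.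
Proof.
move=> [sizeB _ pairB sameB] Bn sizes.
have labT : labelled (fun x => Some (lab x)) = [set: T] by apply/setP => x; rewrite !inE.
have eq_pblockE x y : (pblock (label_classes (fun x => Some (lab x))) x ==
    pblock (label_classes (fun x => Some (lab x))) y) = (lab x == lab y).
  by rewrite eq_pblock_label_classes ?labT.
split => //.
- by rewrite -labT; apply: label_classes_partition.
- by move=> x y _; rewrite eq_pblockE => ne; apply: pairB.
- by move=> x y xy /eqP; rewrite eq_pblockE => /eqP e; apply: sameB => //; rewrite e.
Qed.

Lemma GDD_exists_of_labelled k ty (X K : finType) (lab : X -> K) B :
  0 < k -> is_labelled_GDD (fun x => Some (lab x)) k B -> B != set0 ->
  perm_eq (label_sizes (fun x => Some (lab x))) (type_sizes ty) -> GDD_exists k ty.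
Proof.
move=> k_gt0 gddB Bn sizes.
have cardX : #|X| = type_points ty.
  rewrite type_pointsE -(perm_sumn sizes) -card_labelled.
  by apply: eq_card => x; rewrite !inE.
pose h (i : 'I_(type_points ty)) := enum_val (cast_ord (esym cardX) i).
have h_bij : bijective h.
  exists (fun x => cast_ord cardX (enum_rank x)) => [i|x]; rewrite /h.
  - by rewrite enum_valK cast_ordKV.
  - by rewrite cast_ordK enum_rankK.
have sizes_h := label_sizes_comp (fun x => Some (lab x)) h_bij.
have [B' gddB' B'n] : exists2 B' : {set {set 'I_(type_points ty)}},
    is_labelled_GDD (fun i => Some (lab (h i))) k B' & B' != set0.
  by apply: labelled_GDD_transfer k_gt0 gddB Bn _; rewrite perm_sym.
exists (label_classes (fun i => Some (lab (h i)))), B'.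
exact: is_GDD_label_classes gddB' B'n (perm_trans sizes_h sizes).
Qed.

(** * Weighting *)

Lemma labelled_GDD_bigcup (X I : finType) (K L : eqType) (lab : I -> X -> option K)
    (fin : X -> L) k (J : {set I}) (F : I -> {set {set X}}) :
  {in J, forall i, is_labelled_GDD (lab i) k (F i)} ->
  (forall x y, fin x != fin y -> #|[set i in J | separated (lab i) x y]| = 1) ->
  (forall x y, x != y -> fin x = fin y -> {in J, forall i, ~~ separated (lab i) x y}) ->
  is_labelled_GDD (fun x => Some (fin x)) k (\bigcup_(i in J) F i).
Proof.
move=> gddF once never.
have sepF i b x y : i \in J -> b \in F i -> x \in b -> y \in b -> x != y ->
    separated (lab i) x y.
  by move=> iJ; apply: labelled_GDD_separated (gddF i iJ).
split.
- by move=> b /bigcupP[i iJ bF]; have [sizeF _ _ _] := gddF i iJ; apply: sizeF.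
- by move=> b _; apply/subsetP => x; rewrite inE.
- move=> x y /and3P[_ _ /= ne]; have xy : x != y by apply: contraNneq ne => ->.
  have /cards1P[i0 e0] : #|[set i in J | separated (lab i) x y]| == 1 by rewrite once.
  have /setIdP[i0J sep0] : i0 \in [set i in J | separated (lab i) x y] by rewrite e0 set11.
  have [_ _ pair0 _] := gddF i0 i0J; rewrite -(pair0 x y sep0).
  apply: eq_card => b; rewrite !inE; apply/andP/andP => -[bF xyb]; split => //.
    case/bigcupP: bF => i iJ bF; have /andP[xb yb] := xyb.
    have : i \in [set i in J | separated (lab i) x y] by rewrite inE iJ (sepF i b).
    by rewrite e0 => /set1P <-.
  by apply/bigcupP; exists i0.
- move=> x y xy [e] b /bigcupP[i iJ bF]; apply/negP => /andP[xb yb].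
  by move: (never x y xy e i iJ); rewrite (sepF i b).
Qed.

Section Weighting.
Variables (T E : finType) (w : T -> nat).

Definition point := ({p : T & 'I_(w p)} + E)%type.

(* The ingredient on [S] with extra points [A]: its groups are the copies of
   each point of [S], and [A]. *)
Definition ingredient_label (S : {set T}) (A : {set E}) (x : point) : option (option T) :=
  match x with
  | inl s => if tag s \in S then Some (Some (tag s)) else None
  | inr z => if z \in A then Some None else None
  end.

(* The result: its groups are the inflated members of [R], and [E]. *)
Definition final_label (R : {set {set T}}) (x : point) : option {set T} :=
  if x is inl s then Some (pblock R (tag s)) else None.

Lemma separated_copies S A s s' :
  separated (ingredient_label S A) (inl s) (inl s') =
  [&& tag s \in S, tag s' \in S & tag s != tag s'].
Proof. by rewrite /separated /=; do 2 case: (_ \in S). Qed.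

Lemma separated_copy_extra S A s z :
  separated (ingredient_label S A) (inl s) (inr z) = (tag s \in S) && (z \in A).
Proof. by rewrite /separated /=; case: (_ \in S); case: (_ \in A). Qed.

Lemma separated_extras S A z z' : separated (ingredient_label S A) (inr z) (inr z') = false.
Proof. by rewrite /separated /=; case: (_ \in A); case: (_ \in A). Qed.

Lemma label_sizes_ingredient S A :
  perm_eq (label_sizes (ingredient_label S A)) [seq n <- #|A| :: [seq w p | p <- enum S] | 0 < n].
Proof.
have fibre_extra : #|[set x | ingredient_label S A x == Some None]| = #|A|.
  rewrite card_sum_set -[#|A|]add0n; congr (_ + _).
    by apply: eq_card0 => s; rewrite inE /=; case: ifP.
  by apply: eq_card => z; rewrite inE /=; case: ifP.
have fibre_copy p : #|[set x | ingredient_label S A x == Some (Some p)]| =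
    if p \in S then w p else 0.
  rewrite card_sum_set -[RHS]addn0; congr (_ + _); last first.
    by apply: eq_card0 => z; rewrite inE /=; case: ifP.
  have [pS|pNS] := boolP (p \in S).
    transitivity #|[set s : {q : T & 'I_(w q)} | tag s == p]|.
      2: by rewrite (card_tag_set w (pred1 p)) big_pred1_eq.
    apply: eq_card => s; rewrite !inE /=.
    by case: ifP => [_ //|sNS]; apply/esym/eqP => e; move: sNS; rewrite e pS.
  by apply: eq_card0 => s; rewrite inE /=; case: ifP => // sS; apply: contraNF pNS => /eqP [<-].
apply: (perm_trans (label_sizesE _)); rewrite enum_option /= fibre_extra -map_comp.
rewrite (eq_map fibre_copy) (filter_pos_map_enum (S := S)); last first.
  by move=> p; rewrite inE => /negbTE ->.
suff -> : [seq (if p \in S then w p else 0) | p <- enum S] = [seq w p | p <- enum S] by [].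
by apply/eq_in_map => p; rewrite mem_enum => ->.
Qed.

Lemma label_sizes_final R : partition R [set: T] ->
  perm_eq (label_sizes (fun x => Some (final_label R x)))
          [seq n <- #|E| :: [seq \sum_(p in r) w p | r : {set T} <- enum R] | 0 < n].
Proof.
case/and3P => /eqP coverR trivR _.
have fibre_extra : #|[set x | Some (final_label R x) == Some None]| = #|E|.
  rewrite card_sum_set -[#|E|]add0n -cardsT; congr (_ + _).
    by apply: eq_card0 => s; rewrite inE.
have fibre_copy r : #|[set x | Some (final_label R x) == Some (Some r)]| =
    \sum_(p | pblock R p == r) w p.
  rewrite card_sum_set -card_tag_set -[RHS]addn0; congr (_ + _).
  by apply: eq_card0 => z; rewrite inE.
apply: (perm_trans (label_sizesE _)); rewrite enum_option /= fibre_extra -map_comp.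
rewrite (eq_map fibre_copy) (filter_pos_map_enum (S := R)); last first.
  move=> r; rewrite inE => rNR; rewrite big_pred0 // => p.
  by apply: contraNF rNR => /eqP <-; rewrite pblock_mem ?coverR.
suff -> : [seq \sum_(p | pblock R p == r) w p | r <- enum R] =
          [seq \sum_(p in r) w p | r : {set T} <- enum R] by [].
apply/eq_in_map => r; rewrite mem_enum => rR.
apply: eq_bigl => p; apply/eqP/idP => [<-|pr]; last exact: def_pblock.
by rewrite mem_pblock coverR.
Qed.

Lemma ingredient_of_GDD k ty (S : {set T}) (A : {set E}) : 0 < k -> GDD_exists k ty ->
  perm_eq [seq n <- #|A| :: [seq w p | p <- enum S] | 0 < n] (type_sizes ty) ->
  exists2 F, is_labelled_GDD (ingredient_label S A) k F & F != set0.
Proof.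
move=> k_gt0 gddty sizes; apply: labelled_GDD_of_GDD_exists k_gt0 gddty _.
exact: perm_trans (label_sizes_ingredient S A) sizes.
Qed.

Section Construction.
Variables (k : nat) (J : {set {set T}}) (A : {set T} -> {set E}) (R : {set {set T}}).
Variable F : {set T} -> {set {set point}}.
Hypotheses
  (lines_once : forall p q, pblock R p != pblock R q ->
     #|[set L in J | (p \in L) && (q \in L)]| = 1)
  (lines_never : forall p q, p != q -> pblock R p = pblock R q ->
     {in J, forall L : {set T}, ~~ ((p \in L) && (q \in L))})
  (extras_once : forall p z, #|[set L in J | (p \in L) && (z \in A L)]| = 1)
  (gddF : {in J, forall L : {set T}, is_labelled_GDD (ingredient_label L (A L)) k (F L)}).

Lemma labelled_GDD_weighting :
  is_labelled_GDD (fun x => Some (final_label R x)) k (\bigcup_(L in J) F L).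
Proof.
apply: labelled_GDD_bigcup gddF _ _.
- move=> [s|z] [s'|z'] //= ne.
  + have pq : tag s != tag s' by apply: contraNneq ne => ->.
    by rewrite -(lines_once ne); apply: eq_card => L; rewrite !inE separated_copies pq andbT.
  + by rewrite -(extras_once (tag s) z'); apply: eq_card => L; rewrite !inE separated_copy_extra.
  + rewrite -(extras_once (tag s') z); apply: eq_card => L.
    by rewrite !inE separated_sym separated_copy_extra.
- move=> [s|z] [s'|z'] xy //= e L LJ; rewrite ?separated_extras //.
  case: e => e; rewrite separated_copies.
  have [->|pq] := eqVneq (tag s) (tag s'); first by rewrite !andbF.
  by apply: contra (lines_never pq e LJ) => /and3P[-> ->].
Qed.

End Construction.

End Weighting.

Arguments ingredient_label {T E} w S A x.
Arguments final_label {T E} w R x.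

(** * The resolvable master design *)

Lemma type_sizes_uniform u m : 0 < u -> type_sizes [:: (u, m)] = nseq m u.
Proof. by move=> u_gt0; rewrite /type_sizes /= cats0 filter_nseq u_gt0 mul1n. Qed.

Section GDDFacts.
Variables (T : finType) (k : nat) (ty : seq (nat * nat)) (G B : {set {set T}}).
Hypothesis gdd : is_GDD k ty G B.

Lemma GDD_block_unique p q b1 b2 : p != q -> b1 \in B -> b2 \in B ->
  p \in b1 -> q \in b1 -> p \in b2 -> q \in b2 -> b1 = b2.
Proof.
move=> pq b1B b2B pb1 qb1 pb2 qb2; have [_ _ _ pairB sameB] := gdd.
have [same|diff] := eqVneq (pblock G p) (pblock G q).
  by move: (sameB p q pq same b1 b1B); rewrite pb1 qb1.
have /cards1P[b0 e0] : #|[set b in B | (p \in b) && (q \in b)]| == 1 by rewrite pairB.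
have : b1 \in [set b in B | (p \in b) && (q \in b)] by rewrite inE b1B pb1 qb1.
have : b2 \in [set b in B | (p \in b) && (q \in b)] by rewrite inE b2B pb2 qb2.
by rewrite e0 => /set1P -> /set1P ->.
Qed.

Lemma GDD_group_notin_blocks g : 1 < k -> g \in G -> g \notin B.
Proof.
have [/and3P[_ trivG _] _ [_ sizeB] _ sameB] := gdd.
move=> k_gt1 gG; apply/negP => gB; rewrite -(sizeB g gB) in k_gt1.
case/card_gt1P: k_gt1 => p [q [pg qg pq]].
have same : pblock G p = pblock G q.
  by rewrite (def_pblock trivG gG pg) (def_pblock trivG gG qg).
by move: (sameB p q pq same g gB); rewrite pg qg.
Qed.

Hypothesis card_groups : #|G| = k.

(* A block meets each group at most once and has as many points as there are groups. *)
Lemma card_block_group b g : b \in B -> g \in G -> #|b :&: g| = 1.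
Proof.
have [/and3P[/eqP coverG trivG _] _ [_ sizeB] _ sameB] := gdd.
move=> bB gG; have inj : {in b &, injective (pblock G)}.
  move=> p q pb qb e; apply/eqP; apply: contraT => pq.
  by move: (sameB p q pq e b bB); rewrite pb qb.
have imG : pblock G @: b = G.
  apply/eqP; rewrite eqEcard card_in_imset // sizeB // card_groups leqnn andbT.
  by apply/subsetP => _ /imsetP[p _ ->]; rewrite pblock_mem ?coverG.
have /imsetP[p pb gE] : g \in pblock G @: b by rewrite imG.
apply/eqP/cards1P; exists p; apply/setP => q; rewrite !inE.
apply/andP/eqP => [[qb qg]|->]; last by rewrite pb gE mem_pblock coverG.
by apply: inj => //; rewrite -gE (def_pblock trivG gG qg).
Qed.

(* Double counting of the pairs (b, y) with x, y in b and y in g. *)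
Lemma card_blocks_through x g : g \in G -> x \notin g -> #|[set b in B | x \in b]| = #|g|.
Proof.
have [/and3P[/eqP coverG trivG _] _ _ pairB _] := gdd.
move=> gG xNg; have once y : y \in g -> #|[set b in B | (x \in b) && (y \in b)]| = 1.
  move=> yg; apply: pairB; first by apply: contraNneq xNg => ->.
  by rewrite (def_pblock trivG gG yg); apply: contraNneq xNg => <-; rewrite mem_pblock coverG.
have card_meet b : #|b :&: g| = \sum_(y in g) (y \in b).
  rewrite -sum1_card (eq_bigl (fun y => (y \in g) && (y \in b))) => [|y]; last first.
    by rewrite inE andbC.
  by rewrite big_mkcondr; apply: eq_bigr => y _; case: (y \in b).
transitivity (\sum_(b in B | x \in b) \sum_(y in g) (y \in b)).
  rewrite -sum1_card; apply: eq_big => [b|b]; first by rewrite inE.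
  by rewrite inE => /andP[bB _]; rewrite -card_meet card_block_group.
rewrite exchange_big /= -[RHS]sum1_card; apply: eq_bigr => y yg; rewrite -(once y yg) -sum1_card.
rewrite [RHS](eq_bigl (fun b => ((b \in B) && (x \in b)) && (y \in b))) => [|b]; last first.
  by rewrite inE andbA.
by rewrite [RHS]big_mkcondr; apply: eq_bigr => b _; case: (y \in b).
Qed.

End GDDFacts.

(* Each parallel class has exactly one block through [x]. *)
Lemma card_blocks_through_classes (T : finType) (B : {set {set T}}) (P : {set {set {set T}}}) x :
  partition P B -> (forall C, C \in P -> partition C [set: T]) ->
  #|[set b in B | x \in b]| = #|P|.
Proof.
case/and3P => /eqP coverP trivP _ classP.
have coverC C : C \in P -> cover C = [set: T] by case/classP/and3P => /eqP.
have inj : {in P &, injective (fun C => pblock C x)}.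
  move=> C1 C2 C1P C2P e.
  have b1 : pblock C1 x \in C1 by rewrite pblock_mem ?coverC.
  have b2 : pblock C1 x \in C2 by rewrite e pblock_mem ?coverC.
  by rewrite -(def_pblock trivP C1P b1) -(def_pblock trivP C2P b2).
rewrite -(card_in_imset inj); apply: eq_card => b; rewrite inE.
apply/andP/imsetP => [[bB xb]|[C CP ->]].
  have CP : pblock P b \in P by rewrite pblock_mem ?coverP.
  have /and3P[_ trivC _] := classP _ CP.
  by exists (pblock P b) => //; rewrite (def_pblock trivC _ xb) // mem_pblock coverP.
split; last by rewrite mem_pblock coverC.
by rewrite -coverP; apply/bigcupP; exists C; rewrite ?pblock_mem ?coverC.
Qed.

Section Weights.
Variables (T : finType) (gs : {set T}) (a b : nat).

Definition gs_weight (p : T) := if p \in gs then b else a.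

Lemma perm_gs_weight (S : {set T}) :
  perm_eq [seq gs_weight p | p <- enum S] (nseq #|S :&: gs| b ++ nseq #|S :\: gs| a).
Proof.
have const c (A : {set T}) : {in A, forall p, gs_weight p = c} ->
    [seq gs_weight p | p <- enum A] = nseq #|A| c.
  move=> wA; rewrite cardE -(size_map gs_weight); apply/all_pred1P/allP => y /mapP[p].
  by rewrite mem_enum => pA ->; rewrite /= wA.
have splitS : perm_eq (enum S) (enum (S :&: gs) ++ enum (S :\: gs)).
  apply: uniq_perm; rewrite ?enum_uniq // ?cat_uniq ?enum_uniq /=.
    rewrite andbT; apply/hasPn => p; rewrite !mem_enum !inE.
    by case/andP => /negbTE ->; rewrite andbF.
  by move=> p; rewrite mem_cat !mem_enum !inE; case: (p \in gs); rewrite ?andbT ?andbF ?orbF.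
rewrite (perm_trans (perm_map _ splitS)) // map_cat (const b) ?(const a) //.
  by move=> p; rewrite inE /gs_weight => /andP[/negbTE ->].
by move=> p; rewrite inE /gs_weight => /andP[_ ->].
Qed.

End Weights.

Section ResolvableMaster.
Variables (u v : nat) (T : finType) (G B : {set {set T}}) (P : {set {set {set T}}}).
Hypotheses (gdd : is_GDD v.+1 [:: (u, v.+1)] G B) (partP : partition P B)
  (classP : forall C, C \in P -> partition C [set: T]) (u_gt0 : 0 < u) (v_gt0 : 0 < v).

Let coverG : cover G = [set: T]. Proof. by case: gdd => /and3P[/eqP]. Qed.
Let trivG : trivIset G. Proof. by case: gdd => /and3P[]. Qed.
Let coverP : cover P = B. Proof. by case/and3P: partP => /eqP. Qed.
Let trivP : trivIset P. Proof. by case/and3P: partP. Qed.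
Let partG : partition G [set: T]. Proof. by case: gdd. Qed.
Let classB C L : C \in P -> L \in C -> L \in B.
Proof. by move=> CP LC; rewrite -coverP; apply/bigcupP; exists C. Qed.

Lemma card_group g : g \in G -> #|g| = u.
Proof.
case: gdd => _ sizes _ _ _ gG; rewrite type_sizes_uniform // in sizes.
have : #|g| \in [seq #|A : {set T}| | A <- enum G] by apply: map_f; rewrite mem_enum.
by rewrite (perm_mem sizes) => /nseqP[].
Qed.

Lemma card_groups : #|G| = v.+1.
Proof.
case: gdd => _ sizes _ _ _; rewrite type_sizes_uniform // in sizes.
by rewrite cardE -(size_map (fun A : {set T} => #|A|)) (perm_size sizes) size_nseq.
Qed.

Lemma card_block b : b \in B -> #|b| = v.+1.
Proof. by case: gdd => _ _ [_ sizeB] _ _; apply: sizeB. Qed.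

Lemma card_classes : #|P| = u.
Proof.
have [g0 g0G] : exists g0, g0 \in G by apply/card_gt0P; rewrite card_groups.
have [x x_g0] : exists x, x \in g0 by apply/card_gt0P; rewrite card_group.
have [g /setD1P[g_g0 gG]] : exists g, g \in G :\ g0.
  by apply/card_gt0P; move: (cardsD1 g0 G); rewrite g0G card_groups add1n => -[<-].
have xNg : x \notin g.
  by apply: contra g_g0 => xg; rewrite -(def_pblock trivG gG xg) (def_pblock trivG g0G x_g0).
rewrite -(card_blocks_through_classes x partP classP).
by rewrite (card_blocks_through gdd card_groups gG xNg) card_group.
Qed.

Lemma card_class C : C \in P -> #|C| = u.
Proof.
move=> CP; have sumC : \sum_(L in C) #|L| = #|C| * v.+1.
  by rewrite -sum_nat_const; apply: eq_bigr => L /(classB CP); apply: card_block.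
have sumG : \sum_(g in G) #|g| = v.+1 * u.
  by rewrite -card_groups -sum_nat_const; apply: eq_bigr => g; apply: card_group.
have := card_partition (classP CP); rewrite (card_partition partG) sumC sumG mulnC => /eqP.
by rewrite eqn_pmul2r // => /eqP ->.
Qed.

Variables (a b c d t : nat) (gs : {set T}) (P0 : {set {set T}}).
Hypotheses (gsG : gs \in G) (P0P : P0 \in P) (t_le : t <= u - 1).

Local Notation w := (gs_weight gs a b).
Local Notation Q := (enum (P :\ P0)).
Local Notation extra := ('I_t * 'I_c + 'I_d)%type.

Definition lines : {set {set T}} := G :|: (B :\: P0).

(* The c points [inl (i, _)] go with the blocks of the i-th class of [P :\ P0],
   the d points [inr _] with every group. *)
Definition extras (L : {set T}) : {set extra} :=
  [set z : extra | if z is inl ij then L \in nth set0 Q ij.1 else L \in G].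

Let groupNB g : g \in G -> g \notin B.
Proof. by move=> gG; apply: GDD_group_notin_blocks gdd g _ gG. Qed.

Lemma size_Q : size Q = u - 1.
Proof.
by rewrite -cardE; move: (cardsD1 P0 P); rewrite P0P card_classes => ->; rewrite add1n subn1.
Qed.

Lemma nth_Q i : i < t -> nth set0 Q i \in P :\ P0.
Proof. by move=> it; rewrite -mem_enum mem_nth // size_Q; apply: leq_trans t_le. Qed.

Let P0_partition := classP P0P.
Let coverP0 : cover P0 = [set: T]. Proof. by case/and3P: P0_partition => /eqP. Qed.
Let trivP0 : trivIset P0. Proof. by case/and3P: P0_partition. Qed.

Lemma lines_once p q : pblock P0 p != pblock P0 q ->
  #|[set L in lines | (p \in L) && (q \in L)]| = 1.
Proof.
move=> pq0; have pq : p != q by apply: contraNneq pq0 => ->.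
have [_ _ _ pairB sameB] := gdd.
have [same|diff] := eqVneq (pblock G p) (pblock G q).
  rewrite -(cards1 (pblock G p)); apply: eq_card => L; rewrite !inE.
  apply/idP/eqP => [/andP[/orP[LG|/andP[_ LB]] /andP[pL qL]]|->].
  - by rewrite (def_pblock trivG LG pL).
  - by move: (sameB p q pq same L LB); rewrite pL qL.
  by rewrite pblock_mem ?coverG // mem_pblock coverG inE same mem_pblock coverG inE.
rewrite -(pairB p q pq diff); apply: eq_card => L; rewrite !inE.
apply/andP/andP => -[LJ /andP[pL qL]]; split; rewrite ?pL ?qL //.
  case/orP: LJ => [LG|/andP[//]].
  by move: diff; rewrite (def_pblock trivG LG pL) (def_pblock trivG LG qL) eqxx.
apply/orP; right; rewrite LJ andbT; apply: contra pq0 => LP0.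
by rewrite (def_pblock trivP0 LP0 pL) (def_pblock trivP0 LP0 qL).
Qed.

Lemma lines_never p q : p != q -> pblock P0 p = pblock P0 q ->
  {in lines, forall L : {set T}, ~~ ((p \in L) && (q \in L))}.
Proof.
move=> pq same0 L; have [_ _ _ _ sameB] := gdd.
have L0P0 : pblock P0 p \in P0 by rewrite pblock_mem ?coverP0.
have pL0 : p \in pblock P0 p by rewrite mem_pblock coverP0.
have qL0 : q \in pblock P0 p by rewrite same0 mem_pblock coverP0.
rewrite !inE => /orP[LG|/andP[LNP0 LB]]; apply/negP => /andP[pL qL].
  have same : pblock G p = pblock G q by rewrite (def_pblock trivG LG pL) (def_pblock trivG LG qL).
  by move: (sameB p q pq same _ (classB P0P L0P0)); rewrite pL0 qL0.
by move: LNP0; rewrite (GDD_block_unique gdd pq LB (classB P0P L0P0) pL qL pL0 qL0) L0P0.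
Qed.

Lemma extras_once p z : #|[set L in lines | (p \in L) && (z \in extras L)]| = 1.
Proof.
case: z => [[i j]|e]; last first.
  rewrite -(cards1 (pblock G p)) -(sets_through_pblock p partG); apply: eq_card => L.
  by rewrite !inE; case: (L \in G); rewrite ?andbF ?andbT.
have /setD1P[CNP0 CP] := nth_Q (ltn_ord i).
rewrite -(cards1 (pblock (nth set0 Q i) p)) -(sets_through_pblock p (classP CP)).
apply: eq_card => L; rewrite !inE /=; apply/idP/idP => [/and3P[_ -> ->] //|/andP[LC pL]].
rewrite pL LC !andbT (classB CP LC) andbT; apply/orP; right.
by apply: contra CNP0 => LP0; rewrite -(def_pblock trivP CP LC) (def_pblock trivP P0P LP0).
Qed.

Lemma card_extras_group g : g \in G -> #|extras g| = d.
Proof.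
move=> gG; rewrite card_sum_set; transitivity (0 + #|[set: 'I_d]|).
  2: by rewrite cardsT card_ord.
congr (_ + _); last first.
  by apply: eq_card => e; rewrite !inE gG.
apply: eq_card0 => -[i j]; rewrite inE /=; apply: contraNF (groupNB gG).
have /setD1P[_ CP] := nth_Q (ltn_ord i); exact: classB CP.
Qed.

Lemma card_extras_block L : L \in B -> #|extras L| = (index (pblock P L) Q < t) * c.
Proof.
move=> LB; have LNG : L \notin G by apply/negP => LG; move: (groupNB LG); rewrite LB.
rewrite card_sum_set.
transitivity (#|setX [set i : 'I_t | val i == index (pblock P L) Q] [set: 'I_c]| + 0).
  2: by rewrite cardsX card_ord_eq cardsT card_ord addn0.
congr (_ + _).
  apply: eq_card => -[i j]; rewrite !inE /= andbT.
  have /setD1P[_ CP] := nth_Q (ltn_ord i).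
  apply/idP/eqP => [LC|ei].
    by rewrite (def_pblock trivP CP LC) index_uniq ?enum_uniq // size_Q; apply: leq_trans t_le.
  have : index (pblock P L) Q < size Q by rewrite -ei size_Q; apply: leq_trans t_le.
  by rewrite index_mem => inQ; rewrite ei nth_index // mem_pblock coverP.
by apply: eq_card0 => e; rewrite inE (negbTE LNG).
Qed.

Hypotheses (hA : GDD_exists 4 [:: (a, u); (d, 1)]) (hB : GDD_exists 4 [:: (b, u); (d, 1)])
  (hC : 0 < t * c -> GDD_exists 4 [:: (a, v); (b, 1); (c, 1)])
  (hD : c = 0 \/ t < u - 1 -> GDD_exists 4 [:: (a, v); (b, 1)]).

Lemma group_ingredient g : g \in G ->
  exists2 F, is_labelled_GDD (ingredient_label w g (extras g)) 4 F & F != set0.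
Proof.
move=> gG; have key x : GDD_exists 4 [:: (x, u); (d, 1)] ->
    perm_eq [seq w p | p <- enum g] (nseq u x) ->
    exists2 F, is_labelled_GDD (ingredient_label w g (extras g)) 4 F & F != set0.
  move=> gddx wg; apply: ingredient_of_GDD gddx _ => //.
  by rewrite card_extras_group //; apply: perm_pos_cons.
have := perm_gs_weight gs a b g; have [eg|g_gs] := eqVneq g gs.
  by subst g; rewrite setIid setDv cards0 card_group // cats0; apply: key.
have /trivIsetP/(_ g gs gG gsG g_gs) dis := trivG.
by rewrite (disjoint_setI0 dis) (setDidPl dis) cards0 card_group //; apply: key.
Qed.

Lemma block_weights L : L \in B -> perm_eq [seq w p | p <- enum L] (nseq v a ++ [:: b]).
Proof.
move=> LB; apply: perm_trans (perm_gs_weight gs a b L) _.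
have meet := card_block_group gdd card_groups LB gsG.
have := cardsID gs L; rewrite meet (card_block LB) add1n => -[->].
by rewrite perm_catC.
Qed.

Lemma block_ingredient L : L \in B -> L \notin P0 ->
  exists2 F, is_labelled_GDD (ingredient_label w L (extras L)) 4 F & F != set0.
Proof.
move=> LB LNP0; have wL := block_weights LB.
have idx_lt : index (pblock P L) Q < u - 1.
  rewrite -size_Q index_mem mem_enum !inE pblock_mem ?coverP // andbT.
  by apply: contraNneq LNP0 => <-; rewrite mem_pblock coverP.
have extrasL := card_extras_block LB.
case: (ltnP (index (pblock P L) Q) t) => [lt|ge]; last first.
  apply: ingredient_of_GDD (hD (or_intror (leq_ltn_trans ge idx_lt))) _ => //.
  by rewrite extrasL ltnNge ge mul0n /type_sizes /=; apply: perm_filter.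
rewrite lt mul1n in extrasL; have [c0|c_gt0] := posnP c.
  apply: ingredient_of_GDD (hD (or_introl c0)) _ => //.
  by rewrite extrasL c0 /type_sizes /=; apply: perm_filter.
apply: ingredient_of_GDD (hC _) _ => //; first by rewrite muln_gt0 c_gt0 (leq_ltn_trans _ lt).
rewrite extrasL /type_sizes /= -[[:: b; c]]/([:: b] ++ [:: c]) catA.
exact: perm_pos_cons.
Qed.

Lemma weighted_design : exists2 F : {set {set point extra w}},
  is_labelled_GDD (fun x => Some (final_label w P0 x)) 4 F & F != set0.
Proof.
have ingredient L : exists2 F, L \in lines ->
    is_labelled_GDD (ingredient_label w L (extras L)) 4 F & L \in lines -> F != set0.
  case: (boolP (L \in lines)) => [Llines|_]; last by exists set0.
  have [F gddF Fn] : exists2 F, is_labelled_GDD (ingredient_label w L (extras L)) 4 F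
                                & F != set0.
    by case/setUP: Llines => [/group_ingredient|/setDP[]]; last exact: block_ingredient.
  by exists F.
have [F gddF Fn] := fin_all_exists2 ingredient.
have gs_lines : gs \in lines by rewrite inE gsG.
exists (\bigcup_(L in lines) F L).
  by apply: labelled_GDD_weighting lines_once lines_never extras_once _ => L /gddF.
have /set0Pn[x xF] := Fn gs gs_lines.
by apply/set0Pn; exists x; apply: subsetP (bigcup_sup _ gs_lines) x xF.
Qed.

Lemma final_label_sizes :
  perm_eq (label_sizes (fun x : point extra w => Some (final_label w P0 x)))
          (type_sizes [:: (v * a + b, u); (c * t + d, 1)]).
Proof.
apply: perm_trans (label_sizes_final extra w P0_partition) _.
have block_sum L : L \in P0 -> \sum_(p in L) w p = v * a + b.
  move=> LP0; rewrite -big_enum /= -(big_map w xpredT id) -sumnE.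
  by rewrite (perm_sumn (block_weights (classB P0P LP0))) sumn_cat sumn_nseq /= addn0 mulnC.
have -> : [seq \sum_(p in L) w p | L : {set T} <- enum P0] = nseq u (v * a + b).
  rewrite -(card_class P0P) cardE -(size_map (fun L : {set T} => \sum_(p in L) w p)).
  by apply/all_pred1P/allP => y /mapP[L]; rewrite mem_enum => /block_sum e ->; rewrite /= e.
by rewrite card_sum card_prod !card_ord /type_sizes /= [c * t]mulnC; apply: perm_pos_cons.
Qed.

End ResolvableMaster.

Theorem theorem3p3 (a b c d t u v : nat) :
  2 <= v -> v <= u - 1 -> t <= u - 1 ->
  RGDD_exists v.+1 [:: (u, v.+1)] ->
  GDD_exists 4 [:: (a, u); (d, 1)] ->
  GDD_exists 4 [:: (b, u); (d, 1)] ->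
  (0 < t * c -> GDD_exists 4 [:: (a, v); (b, 1); (c, 1)]) ->
  (c = 0 \/ t < u - 1 -> GDD_exists 4 [:: (a, v); (b, 1)]) ->
  GDD_exists 4 [:: (v * a + b, u); (c * t + d, 1)].
Proof.
move=> v_ge2 v_le t_le [G [B [gdd [P [partP classP]]]]] hA hB hC hD.
have u_gt0 : 0 < u by lia.
have v_gt0 : 0 < v by lia.
have [gs gsG] : exists gs, gs \in G by apply/card_gt0P; rewrite (card_groups gdd u_gt0).
have [P0 P0P] : exists P0, P0 \in P.
  by apply/card_gt0P; rewrite (card_classes gdd partP classP u_gt0 v_gt0).
have [F gddF Fn] := weighted_design gdd partP classP u_gt0 v_gt0 gsG P0P t_le hA hB hC hD.
by apply: GDD_exists_of_labelled _ gddF Fn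
  (final_label_sizes gdd partP classP u_gt0 a b c d t gsG P0P).
Qed.
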